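(* A matrix scheme $(\Theta,D)$ contains uncertainty if and only if there exist $d_1,d_2\in D$ and $\theta,\theta'\in\Theta$ such that $d_1(\theta)<d_2(\theta)$ and $d_2(\theta')<d_1(\theta')$.
   Context: A preference relation on a set $X$ is a binary relation $\prec$ on $X$ that is asymmetric ($x\prec y \Rightarrow$ not $y\prec x$) and negatively transitive (not $x\prec y$ and not $y\prec z$ $\Rightarrow$ not $x\prec z$). A matrix scheme is a pair $(\Theta,D)$ where $\Theta$ is an arbitrary nonempty set and $D$ is a set of real-valued functions on $\Theta$. Domination on $D$ is the relation $\prec$ defined by: $d_1\prec d_2$ iff $d_1(\theta)\le d_2(\theta)$ for all $\theta\in\Theta$ and $d_1(\theta^* )<d_2(\theta^* )$ for some $\theta^*\in\Theta$. A projection of preference of consequences in $(\Theta,D)$ is a preference relation $\prec^P$ on $D$ such that $d_1\prec d_2\Rightarrow d_1\prec^P d_2$ for all $d_1,d_2\in D$. The matrix scheme $(\Theta,D)$ contains uncertainty if the projection of preference of consequences in $(\Theta,D)$ is not unique (i.e. there are at least two distinct projections). *)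

From Stdlib Require Import Reals.
Open Scope R_scope.

(* A matrix scheme (Theta, D): Theta a nonempty type, D a set of real-valued
   functions on Theta, given as a predicate.  Elements of D are the subtype
   {d | D d}. *)
Definition elemD {Theta : Type} (D : (Theta -> R) -> Prop) : Type := {d : Theta -> R | D d}.

Definition preference_relation {X : Type} (r : X -> X -> Prop) : Prop :=
  (forall x y, r x y -> ~ r y x) /\
  (forall x y z, ~ r x y -> ~ r y z -> ~ r x z).

Definition dominated {Theta : Type} (d1 d2 : Theta -> R) : Prop :=
  (forall t, d1 t <= d2 t) /\ (exists t, d1 t < d2 t).

Definition projection {Theta : Type} (D : (Theta -> R) -> Prop)
  (P : elemD D -> elemD D -> Prop) : Prop :=
  preference_relation P /\
  (forall d1 d2 : elemD D, dominated (proj1_sig d1) (proj1_sig d2) -> P d1 d2).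

Definition contains_uncertainty {Theta : Type} (D : (Theta -> R) -> Prop) : Prop :=
  exists P1 P2 : elemD D -> elemD D -> Prop,
    projection D P1 /\ projection D P2 /\ ~ (forall x y, P1 x y <-> P2 x y).

From Stdlib Require Import Reals.
Open Scope R_scope.
From mathcomp Require Import ssreflect ssrbool eqtype boolp wochoice.
From Stdlib Require Import Lra Classical FunctionalExtensionality ProofIrrelevance.

Set Implicit Arguments.

(* Proof idea.
   (=>) If no two consequences d1, d2 of D are in conflict (d1 < d2 at some
   point, d2 < d1 at another), then any two distinct elements of D are
   comparable for domination.  An asymmetric relation containing domination
   must then coincide with domination, so the projection is unique.
   (<=) Well-order Theta and compare functions lexicographically: f is below
   g when f < g at the first point where they differ.  This is a strict total
   order on Theta -> R extending domination, hence (pulled back to D) a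
   projection.  Rooting the well-ordering at a point t puts t first, so the
   lexicographic orders rooted at the two conflict points t and t' order
   d1, d2 in opposite ways: they are two distinct projections. *)

Lemma strict_total_preference (X : Type) (r : X -> X -> Prop) :
  (forall x y, r x y -> ~ r y x) ->
  (forall x y z, r x y -> r y z -> r x z) ->
  (forall x y, x <> y -> r x y \/ r y x) ->
  preference_relation r.
Proof.
move=> asym trans conn; split=> // x y z nxy nyz rxz.
have [eq_xy|neq_xy] := classic (x = y); first by apply: nyz; rewrite -eq_xy.
by case: (conn _ _ neq_xy) => [//|ryx]; apply: nyz; apply: trans ryx rxz.
Qed.

Lemma preference_pullback {X Y : Type} (h : X -> Y) (r : Y -> Y -> Prop) :
  preference_relation r -> preference_relation (fun x y => r (h x) (h y)).
Proof. by move=> [asym ntrans]; split=> [x y|x y z]; [apply: asym|apply: ntrans]. Qed.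

Definition well_ordering {T : Type} (W : T -> T -> Prop) : Prop :=
  (forall A : T -> Prop, (exists x, A x) -> exists z, A z /\ forall x, A x -> W z x) /\
  (forall x y, W x y -> W y x -> x = y).

Lemma exists_well_ordering (T : Type) : exists W : T -> T -> Prop, well_ordering W.
Proof.
have [R R_wo] := @well_ordering_principle {classic T}.
exists (fun x y => R x y); split.
  move=> A [x Ax].
  have [|z [[Az lbz] _]] := R_wo (fun x => `[< A x >]).
    by exists x; rewrite unfold_in; apply/asboolP.
  exists z; split; first by move: Az; rewrite unfold_in => /asboolP.
  by move=> y Ay; apply: lbz; rewrite unfold_in; apply/asboolP.
move=> x y Rxy Ryx.
apply: (@wo_chain_antisymmetric _ R predT) => //; last by rewrite Rxy Ryx.
by move=> A _; apply: R_wo.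
Qed.

Definition reroot {T : Type} (W : T -> T -> Prop) (p : T) (x y : T) : Prop :=
  x = p \/ (y <> p /\ W x y).

Lemma well_ordering_reroot {T : Type} {W : T -> T -> Prop} (p : T) :
  well_ordering W -> well_ordering (reroot W p).
Proof.
move=> [W_least W_anti]; split.
  move=> A A_ne; have [Ap|nAp] := classic (A p); first by exists p; split; [|left].
  have [z [Az z_least]] := W_least A A_ne.
  exists z; split=> // x Ax; right; split; last exact: z_least.
  by move=> x_p; apply: nAp; rewrite -x_p.
move=> x y [x_p|[y_np Wxy]] [y_p|[x_np Wyx]]; try congruence.
exact: W_anti.
Qed.

Section Lexicographic.
Variables (Theta : Type) (W : Theta -> Theta -> Prop).
Hypothesis W_wo : well_ordering W.
Let W_least := proj1 W_wo.
Let W_anti := proj2 W_wo.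

(* A well-ordering is total and transitive: take least elements of finite sets. *)
Lemma well_ordering_total x y : W x y \/ W y x.
Proof.
have [|z [[->|->] z_least]] := W_least (fun z => z = x \/ z = y); first by exists x; left.
  by left; apply: z_least; right.
by right; apply: z_least; left.
Qed.

Lemma well_ordering_trans x y z : W x y -> W y z -> W x z.
Proof.
move=> Wxy Wyz.
have [|m [m_xyz m_least]] := W_least (fun m => m = x \/ m = y \/ m = z).
  by exists x; left.
case: m_xyz m_least => [->|[->|->]] m_least.
- by apply: m_least; right; right.
- by rewrite (W_anti Wxy); last by apply: m_least; left.
- by rewrite -(W_anti Wyz); last by apply: m_least; right; left.
Qed.

Definition lex (f g : Theta -> R) : Prop :=
  exists t, f t < g t /\ forall s, f s <> g s -> W t s.

(* Two lexicographic comparisons would pick the same first differing point. *)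
Lemma lex_asym f g : lex f g -> ~ lex g f.
Proof.
move=> [t1 [lt1 first1]] [t2 [lt2 first2]].
have t12 : t1 = t2 by apply: W_anti; [apply: first1|apply: first2]; lra.
by rewrite t12 in lt1; lra.
Qed.

(* The first point where f and h differ is the earlier of the two witnesses. *)
Lemma lex_trans f g h : lex f g -> lex g h -> lex f h.
Proof.
move=> [t1 [lt1 first1]] [t2 [lt2 first2]].
have [W12|W21] := well_ordering_total t1 t2.
- exists t1; split.
  + have [gh_t1|gh_t1] := Req_dec (g t1) (h t1); first lra.
    have t12 : t1 = t2 by apply: W_anti; last exact: first2.
    by rewrite -t12 in lt2; lra.
  + move=> s fh_s; have [fg_s|fg_s] := Req_dec (f s) (g s); last exact: first1.
    by apply: well_ordering_trans W12 _; apply: first2; rewrite -fg_s.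
- exists t2; split.
  + have [fg_t2|fg_t2] := Req_dec (f t2) (g t2); first lra.
    have t12 : t1 = t2 by apply: W_anti; first exact: first1.
    by rewrite t12 in lt1; lra.
  + move=> s fh_s; have [gh_s|gh_s] := Req_dec (g s) (h s); last exact: first2.
    by apply: well_ordering_trans W21 _; apply: first1; rewrite gh_s.
Qed.

Lemma lex_connected f g : f <> g -> lex f g \/ lex g f.
Proof.
move=> neq_fg.
have differ : exists s, f s <> g s.
  apply: NNPP => same; apply: neq_fg; apply: functional_extensionality => s.
  by apply: NNPP => fg_s; apply: same; exists s.
have [t [fg_t t_first]] := W_least _ differ.
have [lt|gt] : f t < g t \/ g t < f t by lra.
  by left; exists t.
by right; exists t; split=> // s gf_s; apply: t_first => fg_s; apply: gf_s.
Qed.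

Lemma lex_dominated f g : dominated f g -> lex f g.
Proof.
move=> [le_fg [s lt_s]].
have [t [fg_t t_first]] := W_least (fun t => f t <> g t) (ex_intro _ s (Rlt_not_eq _ _ lt_s)).
by exists t; split=> //; have := le_fg t; lra.
Qed.

Lemma lex_projection (D : (Theta -> R) -> Prop) :
  projection D (fun x y : elemD D => lex (proj1_sig x) (proj1_sig y)).
Proof.
split=> [|x y]; last exact: lex_dominated.
apply: (preference_pullback (@proj1_sig _ D)).
apply: strict_total_preference; [exact: lex_asym|exact: lex_trans|exact: lex_connected].
Qed.

End Lexicographic.

Lemma lex_reroot_root {Theta : Type} (W : Theta -> Theta -> Prop) (p : Theta)
    {f g : Theta -> R} :
  f p < g p -> lex (reroot W p) f g.
Proof. by move=> lt_p; exists p; split=> // s _; left. Qed.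

Lemma no_conflict_comparable (Theta : Type) (f g : Theta -> R) :
  ~ (exists t t', f t < g t /\ g t' < f t') ->
  dominated f g \/ dominated g f \/ f = g.
Proof.
move=> no_conflict.
have [[t lt]|no_lt] := classic (exists t, f t < g t).
  left; split=> [s|]; last by exists t.
  by apply: Rnot_lt_le => gt; apply: no_conflict; exists t, s.
have le_gf s : g s <= f s by apply: Rnot_lt_le => lt; apply: no_lt; exists s.
have [[t gt]|no_gt] := classic (exists t, g t < f t); first by right; left; split=> //; exists t.
right; right; apply: functional_extensionality => s.
apply: Rle_antisym; last exact: le_gf.
by apply: Rnot_lt_le => gt; apply: no_gt; exists s.
Qed.

Lemma projection_is_domination {Theta : Type} {D : (Theta -> R) -> Prop}
    {P : elemD D -> elemD D -> Prop} :
  ~ (exists d1 d2 : Theta -> R, D d1 /\ D d2 /\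
       exists t t' : Theta, d1 t < d2 t /\ d2 t' < d1 t') ->
  projection D P ->
  forall x y, P x y <-> dominated (proj1_sig x) (proj1_sig y).
Proof.
move=> no_conflict [[P_asym _] P_dom] x y; split; last exact: P_dom.
case: x y => f Df [g Dg] /= Pxy.
have [//|[dom_gf|eq_fg]] : dominated f g \/ dominated g f \/ f = g.
- by apply: no_conflict_comparable => conflict; apply: no_conflict; exists f, g.
- by case: (P_asym _ _ Pxy); apply: P_dom.
- subst g; rewrite (proof_irrelevance _ Dg Df) in Pxy.
  by case: (P_asym _ _ Pxy Pxy).
Qed.

Theorem mainTheorem5 (Theta : Type) (HTheta : inhabited Theta)
  (D : (Theta -> R) -> Prop) :
  contains_uncertainty D <->
  exists d1 d2 : Theta -> R, D d1 /\ D d2 /\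
    exists t t' : Theta, d1 t < d2 t /\ d2 t' < d1 t'.
Proof.
split.
- move=> [P1 [P2 [proj_P1 [proj_P2 P12]]]]; apply: NNPP => no_conflict.
  apply: P12 => x y.
  by rewrite (projection_is_domination no_conflict proj_P1)
             (projection_is_domination no_conflict proj_P2).
- move=> [d1 [d2 [D1 [D2 [t [t' [lt_t lt_t']]]]]]].
  have [W W_wo] := exists_well_ordering Theta.
  have Wt_wo := well_ordering_reroot t W_wo.
  have Wt'_wo := well_ordering_reroot t' W_wo.
  exists (fun x y : elemD D => lex (reroot W t) (proj1_sig x) (proj1_sig y)).
  exists (fun x y : elemD D => lex (reroot W t') (proj1_sig x) (proj1_sig y)).
  split; first exact: (lex_projection Wt_wo D).
  split; first exact: (lex_projection Wt'_wo D).
  move=> same.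
  have lex12 : lex (reroot W t') d1 d2 :=
    proj1 (same (exist _ d1 D1) (exist _ d2 D2)) (lex_reroot_root W t lt_t).
  exact: (lex_asym Wt'_wo lex12 (lex_reroot_root W t' lt_t')).
Qed.
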